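(* Consider NEAR-DGD$^t$ started from a common point $y_{i,0}=s_0$ ($1\le i\le n$). Suppose each $f_i$ is $\mu_i$-strongly convex with $L_i$-Lipschitz gradient; let $x^\star$ be the unique minimizer of $h=\sum_if_i$, and let $$0<\alpha\le\min\{1/L,\,c_4\}.$$ Then for every $\delta>0$ and all $k=0,1,2,\ldots$, $$\|\bar x_{k+1}-x^\star\|^2\le c_1^2\|\bar x_k-x^\star\|^2+c_3^2\beta^{2t},$$ where $c_1^2=1-\alpha c_2+\alpha\delta-\alpha^2\delta c_2$ and $c_3^2=\alpha(\alpha+\delta^{-1})D^2L^2$. In particular, if $\alpha c_2<1$ and $\delta=\frac{c_2}{2(1-\alpha c_2)}$, then $c_1=\sqrt{1-\alpha c_2/2}\in(0,1)$ and for all $k\ge0$ $$\|\bar x_k-x^\star\|\le c_1^k\|\bar x_0-x^\star\|+\frac{LD\beta^t}{c_2}\sqrt{2(2-\alpha c_2)}.$$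
   Context: NEAR-DGD$^t$ (fixed integer $t\ge1$): $\mathbf{x}_k=\mathbf{Z}^t\mathbf{y}_k$, $\mathbf{y}_{k+1}=\mathbf{x}_k-\alpha\nabla\mathbf{f}(\mathbf{x}_k)$, where $\mathbf{Z}=\mathbf{W}\otimes I_p$, $\mathbf{W}$ a symmetric doubly-stochastic $n\times n$ matrix of a connected network ($w_{ii}>0$, $w_{ij}>0$ iff neighbours) with simple eigenvalue $1$ and other eigenvalues in $(-1,1)$, $\beta\in(0,1)$ its second largest eigenvalue magnitude; $\mathbf{x}=(x_1;\ldots;x_n)$, $\nabla\mathbf{f}(\mathbf{x})=(\nabla f_1(x_1);\ldots;\nabla f_n(x_n))$, $\bar x_k=\frac1n\sum_ix_{i,k}$. Constants: $L=\max_iL_i$, $\mu_{\bar f}=\frac1n\sum_i\mu_i$, $L_{\bar f}=\frac1n\sum_iL_i$, $c_2=\frac{2\mu_{\bar f}L_{\bar f}}{\mu_{\bar f}+L_{\bar f}}$, $c_4=\frac{2}{\mu_{\bar f}+L_{\bar f}}$, $D=\|\mathbf{y}_0-\mathbf{u}^\star\|+\frac{\nu+4}{\nu}\|\mathbf{u}^\star\|$ with $\mathbf{u}^\star=(u_1^\star;\ldots;u_n^\star)$, $u_i^\star=\arg\min f_i$, $\nu=2\alpha\gamma$, $\gamma=\min_i\frac{\mu_iL_i}{\mu_i+L_i}$. *)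

From Stdlib Require Import Reals Lra.
From HB Require Import structures.
From mathcomp Require Import all_boot.
Set Implicit Arguments. Unset Strict Implicit. Unset Printing Implicit Defensive.

Open Scope R_scope.

Lemma Rplus_assoc' : associative Rplus.
Proof. by move=> x y z; rewrite Rplus_assoc. Qed.
Lemma Rplus_comm' : commutative Rplus.
Proof. exact: Rplus_comm. Qed.
Lemma Rplus_0_l' : left_id 0 Rplus.
Proof. exact: Rplus_0_l. Qed.
HB.instance Definition _ := Monoid.isComLaw.Build R 0 Rplus
  Rplus_assoc' Rplus_comm' Rplus_0_l'.

Definition vec (p : nat) := 'I_p -> R.

Definition vadd p (u v : vec p) : vec p := fun j => u j + v j.
Definition vsub p (u v : vec p) : vec p := fun j => u j - v j.
Definition vscale p (a : R) (u : vec p) : vec p := fun j => a * u j.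
Definition inner p (u v : vec p) : R := \big[Rplus/0]_(j < p) (u j * v j).
Definition vnorm p (u : vec p) : R := sqrt (inner u u).

(* Stacked vectors x = (x_1; ...; x_n) in R^{np}, with Euclidean norm. *)
Definition svec (n p : nat) := 'I_n -> vec p.
Definition snorm n p (x : svec n p) : R :=
  sqrt (\big[Rplus/0]_(i < n) inner (x i) (x i)).
Definition ssub n p (x y : svec n p) : svec n p := fun i => vsub (x i) (y i).

Definition avg n p (x : svec n p) : vec p :=
  fun j => / INR n * \big[Rplus/0]_(i < n) x i j.

(* Application of Z = W (x) I_p to a stacked vector. *)
Definition mixZ n p (W : 'I_n -> 'I_n -> R) (y : svec n p) : svec n p :=
  fun i j => \big[Rplus/0]_(l < n) (W i l * y l j).

Definition is_eigenvalue n (W : 'I_n -> 'I_n -> R) (lam : R) : Prop :=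
  exists v : 'I_n -> R, (exists i, v i <> 0) /\
    forall i, \big[Rplus/0]_(l < n) (W i l * v l) = lam * v i.

Definition is_gradient p (f : vec p -> R) (g : vec p -> vec p) : Prop :=
  forall x d : vec p,
    derivable_pt_lim (fun s => f (vadd x (vscale s d))) 0 (inner (g x) d).

Definition strongly_convex p (mu : R) (f : vec p -> R) (g : vec p -> vec p) : Prop :=
  forall x y : vec p,
    f y >= f x + inner (g x) (vsub y x) + mu / 2 * (vnorm (vsub y x)) ^ 2.

Definition lipschitz_grad p (L : R) (g : vec p -> vec p) : Prop :=
  forall x y : vec p, vnorm (vsub (g x) (g y)) <= L * vnorm (vsub x y).

Fixpoint near_y n p (W : 'I_n -> 'I_n -> R) (t : nat) (alpha : R)
    (g : 'I_n -> vec p -> vec p) (y0 : svec n p) (k : nat) : svec n p :=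
  match k with
  | O => y0
  | S k' =>
      let x := iter t (mixZ W) (near_y W t alpha g y0 k') in
      fun i => vsub (x i) (vscale alpha (g i (x i)))
  end.

Definition near_x n p (W : 'I_n -> 'I_n -> R) (t : nat) (alpha : R)
    (g : 'I_n -> vec p -> vec p) (y0 : svec n p) (k : nat) : svec n p :=
  iter t (mixZ W) (near_y W t alpha g y0 k).

Definition Lmax n (Ls : 'I_n -> R) : R := \big[Rmax/0]_(i < n) Ls i.
Definition fbar_const n (cs : 'I_n -> R) : R := / INR n * \big[Rplus/0]_(i < n) cs i.
Definition c2_const (muf Lf : R) : R := 2 * muf * Lf / (muf + Lf).
Definition c4_const (muf Lf : R) : R := 2 / (muf + Lf).

(* The mean iterate performs an inexact gradient step on the average objective
   h / n: xbar_{k+1} = xbar_k - alpha * mean_i grad f_i (x_{k,i}). Its exact part is a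
   (1 - alpha c2)-contraction towards x* by co-coercivity of the averaged gradient, and its error
   is at most alpha L times the consensus error of x_k = Z^t y_k, which the t mixing rounds bound
   by beta^t ||y_k|| since W contracts mean-zero vectors by beta. The iterates y_k stay in the
   ball of radius D: each local gradient step contracts the distance to the local minimizers u_i
   by 1 - nu/2 while mixing moves it by at most 2 ||u||. Young's inequality with weight alpha delta
   gives the one-step bound, and unrolling it for the tuned delta gives the linear rate.
   The contraction by beta comes from a maximizer of ||(W - J/n) v|| on the unit sphere, which
   exists by compactness and yields an eigenvector of W - J/n. *)

From Stdlib Require Import Reals Lra Lia FunctionalExtensionality Classical.
From HB Require Import structures.
From mathcomp Require Import all_boot.
From mathcomp Require all_order all_algebra classical_sets boolp reals topology.
From mathcomp Require normedtype matrix_normedtype derive Rstruct.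
Set Implicit Arguments. Unset Strict Implicit. Unset Printing Implicit Defensive.
Open Scope R_scope.

(** * Finite sums and Euclidean geometry *)

Section RealSums.
Variable n : nat.
Implicit Types F G : 'I_n -> R.

Lemma sumR_mull F c : c * \big[Rplus/0]_(i < n) F i = \big[Rplus/0]_(i < n) (c * F i).
Proof. by elim/big_rec2: _ => [|i y1 y2 _ <-]; ring. Qed.

Lemma sumR_mulr F c : (\big[Rplus/0]_(i < n) F i) * c = \big[Rplus/0]_(i < n) (F i * c).
Proof. by elim/big_rec2: _ => [|i y1 y2 _ <-]; ring. Qed.

Lemma sumR_opp F : - (\big[Rplus/0]_(i < n) F i) = \big[Rplus/0]_(i < n) (- F i).
Proof. by elim/big_rec2: _ => [|i y1 y2 _ <-]; ring. Qed.

Lemma sumR_add F G :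
  \big[Rplus/0]_(i < n) F i + \big[Rplus/0]_(i < n) G i = \big[Rplus/0]_(i < n) (F i + G i).
Proof. by rewrite big_split. Qed.

Lemma sumR_sub F G :
  \big[Rplus/0]_(i < n) F i - \big[Rplus/0]_(i < n) G i = \big[Rplus/0]_(i < n) (F i - G i).
Proof. by rewrite /Rminus sumR_opp sumR_add. Qed.

Lemma ler_sumR F G : (forall i, F i <= G i) ->
  \big[Rplus/0]_(i < n) F i <= \big[Rplus/0]_(i < n) G i.
Proof. by move=> h; elim/big_rec2: _ => [|i y1 y2 _ hy]; [lra | have := h i; lra]. Qed.

End RealSums.

Lemma sumR_ge0 (I : Type) (r : seq I) (P : pred I) (F : I -> R) :
  (forall i, P i -> 0 <= F i) -> 0 <= \big[Rplus/0]_(i <- r | P i) F i.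
Proof. by move=> h; elim/big_rec: _ => [|i x Pi hx]; [lra | have := h i Pi; lra]. Qed.

Lemma sumR_const n c : \big[Rplus/0]_(i < n) c = INR n * c.
Proof.
elim: n => [|n IH]; first by rewrite big_ord0 /=; ring.
by rewrite big_ord_recr IH S_INR /=; ring.
Qed.

Lemma sumR_term_le n (F : 'I_n -> R) i :
  (forall j, 0 <= F j) -> F i <= \big[Rplus/0]_(j < n) F j.
Proof.
move=> h; rewrite (bigD1 i) //=.
rewrite -{1}(Rplus_0_r (F i)); apply: Rplus_le_compat_l.
by apply: sumR_ge0 => j _; exact: h.
Qed.

Lemma sumR_eq0 n (F : 'I_n -> R) :
  (forall j, 0 <= F j) -> \big[Rplus/0]_(j < n) F j = 0 -> forall j, F j = 0.
Proof. by move=> h hs j; have := sumR_term_le j h; have := h j; lra. Qed.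

Lemma le_sqrt_of_quadratic_ge0 a b c : 0 <= a -> 0 <= c ->
  (forall s, 0 <= a - 2 * s * b + s ^ 2 * c) -> b <= sqrt a * sqrt c.
Proof.
move=> ha hc hq.
have b2 : b ^ 2 <= a * c.
  case: (Req_dec c 0) => [c0 | c_ne0].
    case: (Req_dec b 0) => [-> | b_ne0]; first by nra.
    have := hq ((a + 1) / (2 * b)); rewrite c0.
    have -> : 2 * ((a + 1) / (2 * b)) * b = a + 1 by field.
    lra.
  have := hq (b / c).
  have -> : a - 2 * (b / c) * b + (b / c) ^ 2 * c = (a * c - b ^ 2) / c by field.
  move=> h; have : 0 <= (a * c - b ^ 2) / c * c by apply: Rmult_le_pos; lra.
  have -> : (a * c - b ^ 2) / c * c = a * c - b ^ 2 by field.
  lra.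
rewrite -sqrt_mult //; apply: Rle_trans (Rle_abs b) _.
by rewrite -sqrt_Rsqr_abs; apply: sqrt_le_1_alt; rewrite /Rsqr; lra.
Qed.

Lemma sqrt_le_of_le_sq a b : 0 <= b -> a <= b ^ 2 -> sqrt a <= b.
Proof. by move=> hb h; rewrite -(sqrt_pow2 b hb); apply: sqrt_le_1_alt. Qed.

Lemma eq0_of_quadratic_le0 X K : 0 <= X -> (forall s, 0 < s -> 2 * s * X + s ^ 2 * K <= 0) -> X = 0.
Proof.
move=> X_ge0 h; case: (Req_dec X 0) => // X_ne0; exfalso.
have K_le := Rle_abs K; have := Rabs_pos K => K_ge0.
set s := X / (Rabs K + 1).
have s_gt0 : 0 < s by apply: Rdiv_lt_0_compat; lra.
have s_mul : s * (Rabs K + 1) = X by rewrite /s; field; lra.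
have := h s s_gt0; have := Rle_abs (- K); rewrite Rabs_Ropp; nra.
Qed.

Lemma pow_double b t : b ^ (2 * t) = (b ^ t) ^ 2.
Proof. by elim: t => [|t IH]; [rewrite /=; ring | rewrite mulnS pow_add IH /=; ring]. Qed.

Lemma sqrt_recursion_bound (e : nat -> R) q C : 0 < q < 1 -> 0 <= C -> (forall k, 0 <= e k) ->
  (forall k, e k.+1 ^ 2 <= q * e k ^ 2 + C) ->
  forall k, e k <= sqrt q ^ k * e 0%N + sqrt (C / (1 - q)).
Proof.
move=> q01 C_ge0 e_ge0 rec.
have Cq_ge0 : 0 <= C / (1 - q) by apply: Rmult_le_pos => //; apply/Rlt_le/Rinv_0_lt_compat; lra.
have sq_bound k : e k ^ 2 <= q ^ k * e 0%N ^ 2 + C / (1 - q).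
  elim: k => [|k IH]; first by rewrite /= Rmult_1_l; lra.
  apply: Rle_trans (rec k) _.
  have -> : q ^ k.+1 * e 0%N ^ 2 + C / (1 - q) = q * (q ^ k * e 0%N ^ 2 + C / (1 - q)) + C.
    by rewrite /=; field; lra.
  by apply: Rplus_le_compat_r; apply: Rmult_le_compat_l; lra.
move=> k; set A := sqrt q ^ k * e 0%N; set B := sqrt (C / (1 - q)).
have A_ge0 : 0 <= A by apply: Rmult_le_pos => //; apply/pow_le/sqrt_pos.
have B_ge0 : 0 <= B by exact: sqrt_pos.
have A2 : A ^ 2 = q ^ k * e 0%N ^ 2.
  by rewrite /A Rpow_mult_distr -pow_mult Nat.mul_comm pow_mult pow2_sqrt //; lra.
have B2 : B ^ 2 = C / (1 - q) by exact: pow2_sqrt.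
have := sq_bound k; have := e_ge0 k; rewrite -A2 -B2; nra.
Qed.

Definition sqnorm p (u : vec p) : R := inner u u.

Section Euclidean.
Variable p : nat.
Implicit Types u v w : vec p.

Lemma inner_sym u v : inner u v = inner v u.
Proof. by apply: eq_bigr => j _; ring. Qed.

Lemma inner_addl u v w : inner (vadd u v) w = inner u w + inner v w.
Proof. by rewrite /inner sumR_add; apply: eq_bigr => j _; rewrite /vadd; ring. Qed.

Lemma inner_subl u v w : inner (vsub u v) w = inner u w - inner v w.
Proof. by rewrite /inner sumR_sub; apply: eq_bigr => j _; rewrite /vsub; ring. Qed.

Lemma inner_scalel a u w : inner (vscale a u) w = a * inner u w.
Proof. by rewrite /inner sumR_mull; apply: eq_bigr => j _; rewrite /vscale; ring. Qed.

Lemma inner_addr u v w : inner w (vadd u v) = inner w u + inner w v.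
Proof. by rewrite inner_sym inner_addl !(inner_sym w). Qed.

Lemma inner_subr u v w : inner w (vsub u v) = inner w u - inner w v.
Proof. by rewrite inner_sym inner_subl !(inner_sym w). Qed.

Lemma inner_scaler a u w : inner w (vscale a u) = a * inner w u.
Proof. by rewrite inner_sym inner_scalel inner_sym. Qed.

Lemma sqnorm_ge0 u : 0 <= sqnorm u.
Proof. by apply: sumR_ge0 => j _; nra. Qed.

Lemma sqnorm_eq0 u : sqnorm u = 0 -> forall j, u j = 0.
Proof.
move=> h j; have := @sumR_eq0 p (fun j => u j * u j) (fun j => ltac:(nra)) h j; nra.
Qed.

Lemma sqnorm_add u v : sqnorm (vadd u v) = sqnorm u + 2 * inner u v + sqnorm v.
Proof. by rewrite /sqnorm !(inner_addl, inner_addr) (inner_sym v u); ring. Qed.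

Lemma sqnorm_sub u v : sqnorm (vsub u v) = sqnorm u - 2 * inner u v + sqnorm v.
Proof. by rewrite /sqnorm !(inner_subl, inner_subr) (inner_sym v u); ring. Qed.

Lemma sqnorm_scale a u : sqnorm (vscale a u) = a ^ 2 * sqnorm u.
Proof. by rewrite /sqnorm inner_scalel inner_scaler; ring. Qed.

Lemma vnorm_ge0 u : 0 <= vnorm u.
Proof. exact: sqrt_pos. Qed.

Lemma vnorm_sq u : vnorm u ^ 2 = sqnorm u.
Proof. exact/pow2_sqrt/sqnorm_ge0. Qed.

Lemma cauchy_schwarz u v : inner u v <= vnorm u * vnorm v.
Proof.
apply: le_sqrt_of_quadratic_ge0; try exact: sqnorm_ge0.
by move=> s; have := sqnorm_ge0 (vsub u (vscale s v)); rewrite sqnorm_sub sqnorm_scale inner_scaler /sqnorm; lra.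
Qed.

Lemma vnorm_scale a u : vnorm (vscale a u) = Rabs a * vnorm u.
Proof.
rewrite /vnorm -/(sqnorm _) sqnorm_scale sqrt_mult; [|nra|exact: sqnorm_ge0].
by rewrite -(pow2_abs a) sqrt_pow2 //; exact: Rabs_pos.
Qed.

Lemma vnorm_subC u v : vnorm (vsub u v) = vnorm (vsub v u).
Proof. by rewrite /vnorm; f_equal; apply: eq_bigr => j _; rewrite /vsub; ring. Qed.

Lemma sqnorm_add_young (a b : vec p) c : 0 < c ->
  sqnorm (vadd a b) <= (1 + c) * sqnorm a + (1 + / c) * sqnorm b.
Proof.
move=> c_gt0; rewrite sqnorm_add -(vnorm_sq a) -(vnorm_sq b).
have := cauchy_schwarz a b; have := vnorm_ge0 a; have := vnorm_ge0 b.
have : 0 <= / c * (c * vnorm a - vnorm b) ^ 2.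
  by apply: Rmult_le_pos; [exact/Rlt_le/Rinv_0_lt_compat | exact: pow2_ge_0].
have -> : / c * (c * vnorm a - vnorm b) ^ 2
    = c * vnorm a ^ 2 - 2 * vnorm a * vnorm b + / c * vnorm b ^ 2 by field; lra.
lra.
Qed.

End Euclidean.

Definition sinner n p (x y : svec n p) : R := \big[Rplus/0]_(i < n) inner (x i) (y i).
Definition ssqnorm n p (x : svec n p) : R := sinner x x.
Definition sadd n p (x y : svec n p) : svec n p := fun i => vadd (x i) (y i).
Definition sscale n p (a : R) (x : svec n p) : svec n p := fun i => vscale a (x i).

Section Stacked.
Variables n p : nat.
Implicit Types x y : svec n p.

Lemma ssqnorm_ge0 x : 0 <= ssqnorm x.
Proof. by apply: sumR_ge0 => i _; exact: sqnorm_ge0. Qed.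

Lemma snorm_ge0 x : 0 <= snorm x.
Proof. exact: sqrt_pos. Qed.

Lemma snorm_sq x : snorm x ^ 2 = ssqnorm x.
Proof. exact/pow2_sqrt/ssqnorm_ge0. Qed.

Lemma ssqnorm_add x y : ssqnorm (sadd x y) = ssqnorm x + 2 * sinner x y + ssqnorm y.
Proof.
rewrite /ssqnorm /sinner sumR_mull !sumR_add.
by apply: eq_bigr => i _; rewrite -/(sqnorm _) sqnorm_add.
Qed.

Lemma ssqnorm_sub_scale s x y :
  ssqnorm (ssub x (sscale s y)) = ssqnorm x - 2 * s * sinner x y + s ^ 2 * ssqnorm y.
Proof.
rewrite /ssqnorm /sinner !sumR_mull sumR_sub sumR_add.
apply: eq_bigr => i _; rewrite -!/(sqnorm _) sqnorm_sub sqnorm_scale inner_scaler.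
by rewrite /sqnorm; ring.
Qed.

Lemma snorm_add x y : snorm (sadd x y) <= snorm x + snorm y.
Proof.
have cs : sinner x y <= snorm x * snorm y.
  apply: le_sqrt_of_quadratic_ge0; try exact: ssqnorm_ge0.
  by move=> s; rewrite -ssqnorm_sub_scale; exact: ssqnorm_ge0.
apply: sqrt_le_of_le_sq; first by have := snorm_ge0 x; have := snorm_ge0 y; lra.
change (ssqnorm (sadd x y) <= (snorm x + snorm y) ^ 2).
rewrite ssqnorm_add -(snorm_sq x) -(snorm_sq y); lra.
Qed.

Lemma snorm_sub x y : snorm (ssub x y) <= snorm x + snorm y.
Proof.
have -> : ssub x y = sadd x (sscale (-1) y).
  do 2 apply: functional_extensionality => ?.
  by rewrite /ssub /sadd /sscale /vsub /vadd /vscale; ring.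
have -> : snorm y = snorm (sscale (-1) y).
  by rewrite /snorm; f_equal; apply: eq_bigr => i _; apply: eq_bigr => j _;
    rewrite /sscale /vscale; ring.
exact: snorm_add.
Qed.

End Stacked.

(** * Smooth strongly convex functions *)

Ltac vec_identity :=
  rewrite /sqnorm /inner /vsub /vadd /vscale /=;
  rewrite ?sumR_mull ?sumR_opp;
  repeat (rewrite ?sumR_mull ?sumR_opp; first [rewrite sumR_add | rewrite sumR_sub]);
  apply: eq_bigr => j _; field.

Lemma derivable_pt_lim_quadratic a b s :
  derivable_pt_lim (fun s => a * (s * s) + b * s) s (2 * a * s + b).
Proof.
have h := derivable_pt_lim_plus _ _ s _ _
  (derivable_pt_lim_scal _ a s _
     (derivable_pt_lim_mult _ _ s _ _ (derivable_pt_lim_id s) (derivable_pt_lim_id s)))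
  (derivable_pt_lim_scal _ b s _ (derivable_pt_lim_id s)).
by replace (2 * a * s + b) with (a * (1 * s + s * 1) + b * 1) by ring.
Qed.

Section Smooth.
Variables (p : nat) (f : vec p -> R) (g : vec p -> vec p).
Hypothesis grad_f : is_gradient f g.

Lemma gradient_along_line x d s :
  derivable_pt_lim (fun r => f (vadd x (vscale r d))) s (inner (g (vadd x (vscale s d))) d).
Proof.
have shift r : vadd (vadd x (vscale s d)) (vscale r d) = vadd x (vscale (s + r) d).
  by apply: functional_extensionality => j; rewrite /vadd /vscale; ring.
have H := grad_f (vadd x (vscale s d)) d.
move=> eps eps_gt0; have [del Hdel] := H eps eps_gt0.
exists del => h h_ne0 h_small; have := Hdel h h_ne0 h_small.
by rewrite !shift Rplus_0_l Rplus_0_r.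
Qed.

Lemma descent_lemma L : lipschitz_grad L g -> 0 <= L -> forall x y,
  f y <= f x + inner (g x) (vsub y x) + L / 2 * sqnorm (vsub y x).
Proof.
move=> lip L_ge0 x y; set d := vsub y x; set K := inner (g x) d; set N := sqnorm d.
pose z s := vadd x (vscale s d).
pose phi s := f (z s) - (L / 2 * N * (s * s) + K * s).
pose dphi s := inner (g (z s)) d - (2 * (L / 2 * N) * s + K).
have phi_deriv c : 0 <= c <= 1 -> derivable_pt_lim phi c (dphi c).
  move=> _; apply: derivable_pt_lim_minus; first exact: gradient_along_line.
  exact: derivable_pt_lim_quadratic.
have [c [phi_mvt c01]] := MVT_cor2 phi dphi 0 1 Rlt_0_1 phi_deriv.
(* the slope of phi is nonpositive because g is L-Lipschitz along the segment *)
have dphi_le0 : dphi c <= 0.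
  have -> : dphi c = inner (vsub (g (z c)) (g x)) d - L * N * c.
    by rewrite /dphi /= inner_subl /K; field.
  have cs := cauchy_schwarz (vsub (g (z c)) (g x)) d.
  have lip_c := lip (z c) x.
  have zc : vsub (z c) x = vscale c d.
    by apply: functional_extensionality => j; rewrite /z /vadd /vscale /vsub; ring.
  move: lip_c; rewrite zc vnorm_scale Rabs_right; last lra.
  have := vnorm_sq d; have := vnorm_ge0 d; have := vnorm_ge0 (vsub (g (z c)) (g x)).
  rewrite -/N; nra.
have z0 : z 0 = x by apply: functional_extensionality => j; rewrite /z /vadd /vscale; ring.
have z1 : z 1 = y by apply: functional_extensionality => j; rewrite /z /vadd /vscale /d /vsub; ring.
have : phi 1 <= phi 0 by nra.
rewrite /phi z0 z1; lra.
Qed.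

Lemma gradient_eq0_of_min u : (forall z, f u <= f z) -> forall j, g u j = 0.
Proof.
move=> u_min; apply: sqnorm_eq0.
have H := grad_f u (g u).
have := deriv_minimum (fun s => f (vadd u (vscale s (g u)))) (-1) 1 0 (exist _ _ H).
have u0 : vadd u (vscale 0 (g u)) = u.
  by apply: functional_extensionality => j; rewrite /vadd /vscale; ring.
move=> /= h; rewrite /sqnorm; apply: h; try lra.
by move=> z _ _; rewrite u0.
Qed.

End Smooth.

Lemma strong_convexity_le_lipschitz p (f : vec p -> R) g mu L : (0 < p)%N ->
  strongly_convex mu f g -> lipschitz_grad L g -> mu <= L.
Proof.
move=> p_gt0 sc lip.
pose x : vec p := fun _ => 0.
pose y : vec p := fun j => if j == Ordinal p_gt0 then 1 else 0.
have xy_unit : vnorm (vsub y x) = 1.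
  rewrite /vnorm /inner (bigD1 (Ordinal p_gt0)) //= big1.
    by rewrite /vsub /y /x eqxx Rplus_0_r Rminus_0_r Rmult_1_l sqrt_1.
  by move=> j /negbTE hj; rewrite /vsub /y /x hj; ring.
have opp : inner (g y) (vsub x y) = - inner (g y) (vsub y x).
  by rewrite /inner sumR_opp; apply: eq_bigr => j _; rewrite /vsub; ring.
have cs := cauchy_schwarz (vsub (g y) (g x)) (vsub y x).
have scxy := sc x y; have scyx := sc y x; have lipyx := lip y x.
rewrite vnorm_subC in scyx; rewrite opp in scyx; rewrite inner_subl in cs.
rewrite xy_unit in scxy scyx cs lipyx.
have := vnorm_ge0 (vsub (g y) (g x)); nra.
Qed.

Section Cocoercivity.
Variables (p : nat) (F : vec p -> R) (G : vec p -> vec p) (mu L : R).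
Hypotheses (mu_gt0 : 0 < mu) (L_gt0 : 0 < L).
Hypothesis lower : forall x y, F x + inner (G x) (vsub y x) + mu / 2 * sqnorm (vsub y x) <= F y.
Hypothesis upper : forall x y, F y <= F x + inner (G x) (vsub y x) + L / 2 * sqnorm (vsub y x).
Hypothesis lip : lipschitz_grad L G.

Let r a y := vsub (vsub (G y) (G a)) (vscale mu (vsub y a)).

(* F - mu/2 |.|^2 is convex and (L - mu)-smooth with gradient G - mu id; the next two lemmas
   prove the co-coercivity of that gradient by testing the quadratic bounds at y - s r a y. *)
Lemma cocoercivity_trial a y s :
  (s - (L - mu) / 2 * s ^ 2) * sqnorm (r a y)
  <= F y - F a - inner (G a) (vsub y a) - mu / 2 * sqnorm (vsub y a).
Proof.
set w := vsub y (vscale s (r a y)).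
have := lower a w; have := upper y w.
have : inner (G a) (vsub w a) + mu / 2 * sqnorm (vsub w a) - inner (G y) (vsub w y)
   - L / 2 * sqnorm (vsub w y) - inner (G a) (vsub y a) - mu / 2 * sqnorm (vsub y a)
   = (s - (L - mu) / 2 * s ^ 2) * sqnorm (r a y) by rewrite /w /r; vec_identity.
lra.
Qed.

Lemma cocoercivity a y :
  mu * L * sqnorm (vsub y a) + sqnorm (vsub (G y) (G a))
  <= (mu + L) * inner (vsub (G y) (G a)) (vsub y a).
Proof.
set N := sqnorm (vsub y a); set Q := sqnorm (vsub (G y) (G a)).
set I := inner (vsub (G y) (G a)) (vsub y a).
set A := I - mu * N; set B := sqnorm (r a y).
have B_ge0 : 0 <= B by exact: sqnorm_ge0.
have N_ge0 : 0 <= N by exact: sqnorm_ge0.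
have B_def : B = Q - 2 * mu * I + mu ^ 2 * N by rewrite /B /Q /I /N /r; vec_identity.
have trial s : 0 < s -> (2 * s - (L - mu) * s ^ 2) * B <= A.
  move=> s_gt0; have := cocoercivity_trial a y s; have := cocoercivity_trial y a s.
  have -> : sqnorm (r y a) = B by rewrite /B /r; vec_identity.
  have -> : inner (G y) (vsub a y) = - inner (G y) (vsub y a) by vec_identity.
  have -> : sqnorm (vsub a y) = N by rewrite /N; vec_identity.
  have -> : A = inner (G y) (vsub y a) - inner (G a) (vsub y a) - mu * N.
    by rewrite /A /I inner_subl.
  rewrite -/N -/B; lra.
have A_le : A <= (L - mu) * N.
  have := cauchy_schwarz (vsub (G y) (G a)) (vsub y a); have := lip y a.
  have := vnorm_sq (vsub y a); have := vnorm_ge0 (vsub y a).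
  have := vnorm_ge0 (vsub (G y) (G a)); rewrite -/I -/N /A; nra.
have B_le : B <= (L - mu) * A.
  case: (Rlt_le_dec 0 (L - mu)) => hLmu.
    have := trial (/ (L - mu)) (Rinv_0_lt_compat _ hLmu).
    have -> : 2 * / (L - mu) - (L - mu) * (/ (L - mu)) ^ 2 = / (L - mu) by field; lra.
    move=> h; have := Rmult_le_compat_l (L - mu) _ _ (Rlt_le _ _ hLmu) h.
    have -> : (L - mu) * (/ (L - mu) * B) = B by field; lra.
    lra.
  have t1 := trial 1 Rlt_0_1.
  have A0 : A = 0 by nra.
  rewrite A0 in t1 *; nra.
rewrite /A B_def in B_le; lra.
Qed.

Lemma gradient_step_contraction alpha x y : 0 < alpha -> alpha <= 2 / (mu + L) ->
  sqnorm (vsub (vsub x (vscale alpha (G x))) (vsub y (vscale alpha (G y))))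
  <= (1 - 2 * alpha * mu * L / (mu + L)) * sqnorm (vsub x y).
Proof.
move=> alpha_gt0 alpha_le.
have cc := cocoercivity y x.
set N := sqnorm (vsub x y) in cc *; set Q := sqnorm (vsub (G x) (G y)) in cc *.
set I := inner (vsub (G x) (G y)) (vsub x y) in cc *.
have -> : sqnorm (vsub (vsub x (vscale alpha (G x))) (vsub y (vscale alpha (G y))))
   = N - 2 * alpha * I + alpha ^ 2 * Q by rewrite /N /I /Q; vec_identity.
have Q_ge0 : 0 <= Q by exact: sqnorm_ge0.
have alpha_le' : alpha * (mu + L) <= 2.
  have := Rmult_le_compat_r (mu + L) _ _ ltac:(lra) alpha_le.
  have -> : 2 / (mu + L) * (mu + L) = 2 by field; lra.
  lra.
apply: (Rmult_le_reg_r (mu + L)); first lra.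
have -> : (1 - 2 * alpha * mu * L / (mu + L)) * N * (mu + L)
  = (mu + L) * N - 2 * alpha * mu * L * N by field; lra.
have := Rmult_le_compat_l (2 * alpha) _ _ ltac:(lra) cc.
have : alpha * Q * (alpha * (mu + L) - 2) <= 0.
  have : 0 <= alpha * Q by apply: Rmult_le_pos; lra.
  nra.
nra.
Qed.

End Cocoercivity.

Lemma strongly_convex_sqnorm p mu (f : vec p -> R) g : strongly_convex mu f g ->
  forall x y, f x + inner (g x) (vsub y x) + mu / 2 * sqnorm (vsub y x) <= f y.
Proof. by move=> sc x y; have := sc x y; rewrite vnorm_sq; lra. Qed.

Lemma sqnorm_dim0 p (v : vec p) : p = 0%N -> sqnorm v = 0.
Proof. by move=> p0; subst p; rewrite /sqnorm /inner big_ord0. Qed.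

Lemma gradient_step_to_min p (f : vec p -> R) g mu L u alpha x :
  is_gradient f g -> strongly_convex mu f g -> lipschitz_grad L g -> 0 < mu -> 0 < L ->
  (forall z, f u <= f z) -> 0 < alpha -> alpha * L <= 1 ->
  sqnorm (vsub (vsub x (vscale alpha (g x))) u)
  <= (1 - 2 * alpha * mu * L / (mu + L)) * sqnorm (vsub x u).
Proof.
move=> grad_f sc lip mu_gt0 L_gt0 u_min alpha_gt0 alphaL.
case: (posnP p) => [p0 | p_gt0]; first by rewrite !sqnorm_dim0 //; lra.
have muL := strong_convexity_le_lipschitz p_gt0 sc lip.
have step_u : vsub u (vscale alpha (g u)) = u.
  apply: functional_extensionality => j.
  by rewrite /vsub /vscale (gradient_eq0_of_min grad_f u_min); ring.
rewrite -[in X in vsub _ X]step_u.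
apply: gradient_step_contraction => //.
- exact: strongly_convex_sqnorm.
- by move=> y z; apply: descent_lemma => //; lra.
- apply: (Rmult_le_reg_r (mu + L)); first lra.
  rewrite /Rdiv Rmult_assoc Rinv_l; first nra.
  by apply: Rgt_not_eq; lra.
Qed.

(** * Norm bound for symmetric matrices *)

Definition matvec n (B : 'I_n -> 'I_n -> R) (v : vec n) : vec n :=
  fun i => \big[Rplus/0]_(l < n) (B i l * v l).

Module SphereMax.
Import all_order all_algebra classical_sets boolp reals topology normedtype matrix_normedtype derive.
Import Order.TTheory GRing.Theory Num.Theory numFieldNormedType.Exports.
Local Open Scope classical_set_scope.
Local Open Scope ring_scope.

Section Max.
Variables (R : realType) (n : nat).

Lemma continuous_sum (I : Type) (s : seq I) (F : I -> 'rV[R]_n -> R) :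
  (forall i, continuous (F i)) -> continuous (fun c => \sum_(i <- s) F i c).
Proof.
move=> hF; elim: s => [|a s IH].
  by under eq_fun do rewrite big_nil; exact: cst_continuous.
under eq_fun do rewrite big_cons.
by move=> x; exact: (cvgD (hF a x) (IH x)).
Qed.

Let sqsum (c : 'rV[R]_n) := \sum_(i < n) c ord0 i * c ord0 i.

Lemma unit_sphere_max (F : 'rV[R]_n -> R) : (0 < n)%N -> continuous F ->
  exists2 c, sqsum c = 1 & forall d, sqsum d = 1 -> F d <= F c.
Proof.
move=> hn cF.
have coord_sq i : continuous (fun c : 'rV[R]_n => c ord0 i * c ord0 i).
  by move=> x; exact: (cvgM (@coord_continuous _ _ _ ord0 i x) (@coord_continuous _ _ _ ord0 i x)).
pose S := [set c : 'rV[R]_n | sqsum c = 1].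
have S_closed : closed S.
  have sqsum_cont : continuous sqsum by exact: continuous_sum.
  exact: (proj1 (continuous_closedP sqsum) sqsum_cont _ (@closed_eq R 1)).
have cube_compact : compact [set v : 'rV[R]_n | forall i, v ord0 i \in `[(-1 : R), 1]].
  by apply: (@rV_compact _ _ (fun=> `[(-1 : R), 1]%classic)) => _; exact: segment_compact.
have S_compact : compact S.
  apply: (subclosed_compact S_closed cube_compact) => v /= Sv i.
  have : v ord0 i * v ord0 i <= 1.
    rewrite -Sv /sqsum (bigD1 i) //= lerDl.
    by apply: sumr_ge0 => j _; rewrite -expr2 sqr_ge0.
  rewrite in_itv /= -ler_norml -expr2 -real_normK ?num_real // => h.
  by rewrite -(expr_le1 (n := 2)) ?normr_ge0.
have S_nonempty : S !=set0.
  exists (\row_j (if j == Ordinal hn then 1 else 0)).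
  rewrite /S /= /sqsum (bigD1 (Ordinal hn)) //= !mxE eqxx mulr1 big1 ?addr0 //.
  by move=> j /negbTE hj; rewrite !mxE hj mulr0.
have [c Sc cmax] := EVT_max_rV S_nonempty S_compact (continuous_subspaceT cF).
by exists c => [|d Sd]; [move: Sc; rewrite inE | apply: cmax; rewrite inE].
Qed.

Lemma quadratic_form_max (B : 'I_n -> 'I_n -> R) : (0 < n)%N ->
  exists2 v : 'I_n -> R, \sum_(i < n) v i * v i = 1 &
    forall w : 'I_n -> R, \sum_(i < n) w i * w i = 1 ->
      \sum_(i < n) (\sum_(l < n) B i l * w l) * (\sum_(l < n) B i l * w l)
      <= \sum_(i < n) (\sum_(l < n) B i l * v l) * (\sum_(l < n) B i l * v l).
Proof.
move=> hn.
pose Bc i (c : 'rV[R]_n) := \sum_(l < n) B i l * c ord0 l.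
have Bc_cont i : continuous (Bc i).
  apply: continuous_sum => l x.
  exact: (cvgM (@cst_continuous _ _ (B i l) x) (@coord_continuous _ _ _ ord0 l x)).
have Q_cont : continuous (fun c => \sum_(i < n) Bc i c * Bc i c).
  by apply: continuous_sum => i x; exact: (cvgM (Bc_cont i x) (Bc_cont i x)).
have [c c_unit c_max] := unit_sphere_max hn Q_cont.
exists (fun l => c ord0 l) => // w w_unit.
have row_w l : (\row_j w j) ord0 l = w l by rewrite mxE.
have := c_max (\row_j w j); rewrite /sqsum /Bc.
by under eq_bigr do rewrite row_w; move=> /(_ w_unit); under eq_bigr do under eq_bigr do rewrite row_w.
Qed.

End Max.

Import Rstruct.
Local Open Scope R_scope.

Lemma sqnorm_matvec_max n (B : 'I_n -> 'I_n -> R) : (0 < n)%N ->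
  exists2 v : vec n, sqnorm v = 1 &
    forall w, sqnorm w = 1 -> sqnorm (matvec B w) <= sqnorm (matvec B v).
Proof.
move=> hn; have [v v_unit v_max] := @SphereMax.quadratic_form_max Rdefinitions.R n B hn.
by exists v => // w w_unit; apply/RleP; exact: v_max.
Qed.

End SphereMax.

Section MatVec.
Variables (n : nat) (B : 'I_n -> 'I_n -> R).
Implicit Types v w : vec n.

Lemma matvec_add v w : matvec B (vadd v w) = vadd (matvec B v) (matvec B w).
Proof.
apply: functional_extensionality => i.
by rewrite /matvec /vadd sumR_add; apply: eq_bigr => l _; ring.
Qed.

Lemma matvec_scale a v : matvec B (vscale a v) = vscale a (matvec B v).
Proof.
apply: functional_extensionality => i.
by rewrite /matvec /vscale sumR_mull; apply: eq_bigr => l _; ring.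
Qed.

Lemma inner_matvec_sym : (forall i j, B i j = B j i) ->
  forall v w, inner (matvec B v) w = inner v (matvec B w).
Proof.
move=> B_sym v w; rewrite /inner /matvec.
under eq_bigr do rewrite sumR_mulr.
under [RHS]eq_bigr do rewrite sumR_mull.
rewrite exchange_big; apply: eq_bigr => i _; apply: eq_bigr => l _.
by rewrite B_sym; ring.
Qed.

Section Maximizer.
Variable c : vec n.
Hypothesis c_unit : sqnorm c = 1.
Hypothesis c_max : forall w, sqnorm w = 1 -> sqnorm (matvec B w) <= sqnorm (matvec B c).
Let M := sqnorm (matvec B c).

Lemma sqnorm_matvec_le_max z : sqnorm (matvec B z) <= M * sqnorm z.
Proof.
case: (Req_dec (sqnorm z) 0) => z0.
  have Bz0 : sqnorm (matvec B z) = 0.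
    rewrite /sqnorm /inner big1 // => i _.
    by rewrite /matvec big1; [ring | move=> l _; rewrite (sqnorm_eq0 z0); ring].
  by rewrite Bz0 z0; lra.
have z_gt0 : 0 < sqnorm z by have := sqnorm_ge0 z; lra.
set k := / sqrt (sqnorm z).
have k_unit : k ^ 2 * sqnorm z = 1.
  rewrite /k -Rinv_pow; last exact/Rgt_not_eq/sqrt_lt_R0.
  by rewrite pow2_sqrt; [field | lra].
have := @c_max (vscale k z); rewrite matvec_scale !sqnorm_scale => /(_ k_unit) h.
rewrite -[sqnorm (matvec B z)]Rmult_1_r -k_unit.
have : 0 < k ^ 2 by nra.
rewrite -/M in h; nra.
Qed.

(* A maximizer of the Rayleigh quotient of B^2 is an eigenvector of B^2: perturb it along
   the residual w = B (B c) - M c and use the maximality to the first order. *)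
Lemma matvec_matvec_maximizer :
  (forall i j, B i j = B j i) -> forall i, matvec B (matvec B c) i = M * c i.
Proof.
move=> B_sym; set w := vsub (matvec B (matvec B c)) (vscale M c).
suff w0 : forall i, w i = 0 by move=> i; have := w0 i; rewrite /w /vsub /vscale; lra.
apply: sqnorm_eq0; apply: (eq0_of_quadratic_le0 (K := sqnorm (matvec B w) - M * sqnorm w)).
  exact: sqnorm_ge0.
move=> s _; have h := sqnorm_matvec_le_max (vadd c (vscale s w)).
rewrite matvec_add matvec_scale (sqnorm_add c) (sqnorm_add (matvec B c)) in h.
rewrite !sqnorm_scale c_unit !inner_scaler -/M in h.
rewrite -(inner_matvec_sym B_sym (matvec B c) w) in h.
have e : sqnorm w = inner (matvec B (matvec B c)) w - M * inner c w.
  by rewrite /sqnorm {1}/w inner_subl inner_scalel.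
rewrite {1}e; lra.
Qed.

End Maximizer.

Lemma sqnorm_matvec_le (rho : R) : (0 < n)%N -> (forall i j, B i j = B j i) -> 0 <= rho ->
  (forall lam v, (exists i, v i <> 0) -> (forall i, matvec B v i = lam * v i) -> Rabs lam <= rho) ->
  forall z, sqnorm (matvec B z) <= rho ^ 2 * sqnorm z.
Proof.
move=> hn B_sym rho_ge0 eig_bound.
have [c c_unit c_max] := SphereMax.sqnorm_matvec_max B hn.
have BBc := matvec_matvec_maximizer c_unit c_max B_sym.
have B_le := sqnorm_matvec_le_max c_max.
set M := sqnorm (matvec B c) in BBc B_le.
set r := sqrt M.
have r_ge0 : 0 <= r by exact: sqrt_pos.
have r2 : r * r = M by exact/sqrt_sqrt/sqnorm_ge0.
(* B^2 c = r^2 c, so B + r and B - r annihilate each other on c: one of them gives an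
   eigenvector of B for the eigenvalue r or -r. *)
set u := vadd (matvec B c) (vscale r c).
have Bu i : matvec B u i = r * u i.
  by rewrite /u matvec_add matvec_scale /vadd /vscale BBc -r2; ring.
have r_le : r <= rho.
  case: (classic (exists i, u i <> 0)) => [u_ne0 | u0].
    by have := eig_bound r u u_ne0 Bu; rewrite Rabs_right; lra.
  have c_ne0 : exists i, c i <> 0.
    apply: NNPP => c0; move: c_unit; rewrite /sqnorm /inner big1; first lra.
    move=> i _; have -> : c i = 0 by apply: NNPP => ci; apply: c0; exists i.
    ring.
  have := eig_bound (- r) c c_ne0; rewrite Rabs_Ropp Rabs_right; last lra.
  apply=> i; have : u i = 0 by apply: NNPP => ui; apply: u0; exists i.
  by rewrite /u /vadd /vscale; lra.
move=> z; apply: Rle_trans (B_le z) _.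
apply: Rmult_le_compat_r; first exact: sqnorm_ge0.
by rewrite -r2 /=; nra.
Qed.

End MatVec.

(** * Mixing with a symmetric doubly stochastic matrix *)

Definition mean n (v : vec n) : R := / INR n * \big[Rplus/0]_(i < n) v i.
Definition center n (v : vec n) : vec n := fun i => v i - mean v.
Definition col n p (y : svec n p) (j : 'I_p) : vec n := fun i => y i j.

Section Mixing.
Variables (n : nat) (W : 'I_n -> 'I_n -> R) (beta : R).
Hypothesis n_gt0 : (0 < n)%N.
Hypothesis W_sym : forall i j, W i j = W j i.
Hypothesis W_stoch : forall i, \big[Rplus/0]_(j < n) W i j = 1.
Hypothesis W_simple1 : forall v : 'I_n -> R,
  (forall i, \big[Rplus/0]_(l < n) (W i l * v l) = v i) -> forall i j, v i = v j.
Hypothesis beta_max : forall lam, is_eigenvalue W lam -> lam <> 1 -> Rabs lam <= beta.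
Hypothesis beta01 : 0 < beta < 1.
Implicit Types v d : vec n.

Let INR_n_neq0 : INR n <> 0.
Proof. by apply/not_0_INR; move/ltP: n_gt0; lia. Qed.

Lemma W_colsum l : \big[Rplus/0]_(i < n) W i l = 1.
Proof. by rewrite -(W_stoch l); apply: eq_bigr => i _; exact: W_sym. Qed.

Lemma sum_matvec_stoch v : \big[Rplus/0]_(i < n) matvec W v i = \big[Rplus/0]_(i < n) v i.
Proof.
rewrite /matvec exchange_big; apply: eq_bigr => l _.
by rewrite -sumR_mulr W_colsum; ring.
Qed.

Lemma mean_matvec_stoch v : mean (matvec W v) = mean v.
Proof. by rewrite /mean sum_matvec_stoch. Qed.

Lemma sum_center v : \big[Rplus/0]_(i < n) center v i = 0.
Proof. by rewrite /center -sumR_sub sumR_const /mean; field. Qed.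

Lemma center_matvec_stoch v : center (matvec W v) = matvec W (center v).
Proof.
apply: functional_extensionality => i.
rewrite /center mean_matvec_stoch /matvec.
have -> : \big[Rplus/0]_(l < n) (W i l * (v l - mean v))
   = \big[Rplus/0]_(l < n) (W i l * v l) - mean v * \big[Rplus/0]_(l < n) W i l.
  by rewrite sumR_mull sumR_sub; apply: eq_bigr => l _; ring.
by rewrite W_stoch; ring.
Qed.

Lemma sqnorm_center_mean v : sqnorm v = sqnorm (center v) + INR n * mean v ^ 2.
Proof.
have -> : sqnorm v = \big[Rplus/0]_(i < n)
    (center v i * center v i + 2 * mean v * center v i + mean v ^ 2).
  by apply: eq_bigr => i _; rewrite /center; ring.
by rewrite -!sumR_add -sumR_mull sum_center sumR_const /sqnorm /inner; ring.
Qed.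

(* On mean-zero vectors W acts as W - J/n, whose spectrum is that of W with the simple
   eigenvalue 1 replaced by 0. *)
Definition deflated : 'I_n -> 'I_n -> R := fun i l => W i l - / INR n.

Lemma matvec_deflated_mean0 d : \big[Rplus/0]_(i < n) d i = 0 -> matvec deflated d = matvec W d.
Proof.
move=> d0; apply: functional_extensionality => i; rewrite /matvec /deflated.
have -> : \big[Rplus/0]_(l < n) ((W i l - / INR n) * d l)
    = \big[Rplus/0]_(l < n) (W i l * d l) - / INR n * \big[Rplus/0]_(l < n) d l.
  by rewrite sumR_mull sumR_sub; apply: eq_bigr => l _; ring.
by rewrite d0; ring.
Qed.

Lemma deflated_eigen_bound lam v : (exists i, v i <> 0) ->
  (forall i, matvec deflated v i = lam * v i) -> Rabs lam <= beta.
Proof.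
move=> [i0 v_i0] eig.
have sum_deflated : \big[Rplus/0]_(i < n) matvec deflated v i = 0.
  rewrite /matvec exchange_big big1 // => l _.
  by rewrite -sumR_mulr /deflated -sumR_sub sumR_const W_colsum; field.
have lam_sum : lam * \big[Rplus/0]_(i < n) v i = 0.
  transitivity (\big[Rplus/0]_(i < n) matvec deflated v i); last exact: sum_deflated.
  by rewrite sumR_mull; apply: eq_bigr => i _; rewrite eig.
case: (Req_dec lam 0) => [-> | lam_ne0]; first by rewrite Rabs_R0; lra.
have v_sum0 : \big[Rplus/0]_(i < n) v i = 0 by case: (Rmult_integral _ _ lam_sum).
have eigW i : \big[Rplus/0]_(l < n) (W i l * v l) = lam * v i.
  by rewrite -eig matvec_deflated_mean0.
apply: beta_max; first by exists v; split; [exists i0 | exact: eigW].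
move=> lam1; subst lam.
have v_const : forall i j, v i = v j by apply: W_simple1 => i; rewrite eigW; ring.
move: v_sum0; rewrite (eq_bigr (fun _ => v i0)) ?sumR_const; last by move=> i _; exact: v_const.
by move=> /Rmult_integral [|]; lra.
Qed.

Lemma sqnorm_matvec_mean0 d : \big[Rplus/0]_(i < n) d i = 0 ->
  sqnorm (matvec W d) <= beta ^ 2 * sqnorm d.
Proof.
move=> d0; rewrite -matvec_deflated_mean0 //.
apply: (sqnorm_matvec_le n_gt0); [| lra | exact: deflated_eigen_bound].
by move=> i j; rewrite /deflated W_sym.
Qed.

Notation Wt t := (iter t (matvec W)).

Lemma mean_iter_stoch t v : mean (Wt t v) = mean v.
Proof. by elim: t => //= t IH; rewrite mean_matvec_stoch. Qed.

Lemma center_iter_stoch t v : center (Wt t v) = Wt t (center v).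
Proof. by elim: t => //= t IH; rewrite center_matvec_stoch IH. Qed.

Lemma sqnorm_iter_mean0 t d : \big[Rplus/0]_(i < n) d i = 0 ->
  sqnorm (Wt t d) <= beta ^ (2 * t) * sqnorm d.
Proof.
move=> d0; elim: t => [|t IH]; first by rewrite /= Rmult_1_l; lra.
have sum0 : \big[Rplus/0]_(i < n) Wt t d i = 0.
  by elim: (t) => //= k IHk; rewrite sum_matvec_stoch.
rewrite mulnS pow_add Rmult_assoc.
apply: Rle_trans (sqnorm_matvec_mean0 sum0) _.
by apply: Rmult_le_compat_l; [apply: pow_le; lra | exact: IH].
Qed.

Lemma sqnorm_center_iter t v : sqnorm (center (Wt t v)) <= beta ^ (2 * t) * sqnorm v.
Proof.
rewrite center_iter_stoch; apply: Rle_trans (sqnorm_iter_mean0 t (sum_center v)) _.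
apply: Rmult_le_compat_l; first by apply: pow_le; lra.
by rewrite (sqnorm_center_mean v); have := pow2_ge_0 (mean v); have := pos_INR n; nra.
Qed.

Lemma sqnorm_iter_le t v : sqnorm (Wt t v) <= sqnorm v.
Proof.
rewrite (sqnorm_center_mean (Wt t v)) (sqnorm_center_mean v) mean_iter_stoch center_iter_stoch.
have := sqnorm_iter_mean0 t (sum_center v).
have : beta ^ (2 * t) <= 1 by rewrite -(pow1 (2 * t)); apply: pow_incr; lra.
have := sqnorm_ge0 (center v); nra.
Qed.

Section Stacked.
Variable p : nat.
Implicit Types y z : svec n p.

Lemma col_mixZ_iter t y j : col (iter t (mixZ W) y) j = Wt t (col y j).
Proof. by elim: t => //= t <-. Qed.

Lemma ssqnorm_cols y : ssqnorm y = \big[Rplus/0]_(j < p) sqnorm (col y j).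
Proof. by rewrite /ssqnorm /sinner /sqnorm /inner exchange_big. Qed.

Lemma ssqnorm_mixZ_iter t y : ssqnorm (iter t (mixZ W) y) <= ssqnorm y.
Proof.
by rewrite !ssqnorm_cols; apply: ler_sumR => j; rewrite col_mixZ_iter; exact: sqnorm_iter_le.
Qed.

Lemma snorm_mixZ_iter t y : snorm (iter t (mixZ W) y) <= snorm y.
Proof. exact/sqrt_le_1_alt/ssqnorm_mixZ_iter. Qed.

Lemma avg_mixZ_iter t y : avg (iter t (mixZ W) y) = avg y.
Proof.
apply: functional_extensionality => j.
by have := mean_iter_stoch t (col y j); rewrite -col_mixZ_iter.
Qed.

Lemma consensus_mixZ_iter t y :
  \big[Rplus/0]_(i < n) sqnorm (vsub (iter t (mixZ W) y i) (avg (iter t (mixZ W) y)))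
  <= beta ^ (2 * t) * ssqnorm y.
Proof.
set x := iter t (mixZ W) y; have -> : \big[Rplus/0]_(i < n) sqnorm (vsub (x i) (avg x))
    = \big[Rplus/0]_(j < p) sqnorm (center (col x j)).
  by rewrite /sqnorm /inner exchange_big.
rewrite ssqnorm_cols sumR_mull; apply: ler_sumR => j.
by rewrite /x col_mixZ_iter; exact: sqnorm_center_iter.
Qed.

Lemma mixZ_iter_ssub t y z :
  iter t (mixZ W) (ssub y z) = ssub (iter t (mixZ W) y) (iter t (mixZ W) z).
Proof.
elim: t => //= t ->; do 2 apply: functional_extensionality => ?.
by rewrite /mixZ /ssub /vsub sumR_sub; apply: eq_bigr => l _; ring.
Qed.

End Stacked.
End Mixing.

(** * The average objective *)

Lemma derivable_pt_lim_sum n (F : 'I_n -> R -> R) (l : 'I_n -> R) s :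
  (forall i, derivable_pt_lim (F i) s (l i)) ->
  derivable_pt_lim (fun r => \big[Rplus/0]_(i < n) F i r) s (\big[Rplus/0]_(i < n) l i).
Proof.
move=> dF; elim: (index_enum _) => [|a r IH].
  rewrite big_nil; have -> : (fun r => \big[Rplus/0]_(i <- [::]) F i r) = fun _ => 0.
    by apply: functional_extensionality => x; rewrite big_nil.
  exact: derivable_pt_lim_const.
rewrite big_cons; have -> : (fun x => \big[Rplus/0]_(i <- a :: r) F i x)
    = fun x => F a x + \big[Rplus/0]_(i <- r) F i x.
  by apply: functional_extensionality => x; rewrite big_cons.
exact: derivable_pt_lim_plus (dF a) IH.
Qed.

Lemma is_gradient_sum n p (f : 'I_n -> vec p -> R) (g : 'I_n -> vec p -> vec p) :
  (forall i, is_gradient (f i) (g i)) ->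
  is_gradient (fun z => \big[Rplus/0]_(i < n) f i z)
              (fun z j => \big[Rplus/0]_(i < n) g i z j).
Proof.
move=> grad_f x d.
have -> : inner (fun j => \big[Rplus/0]_(i < n) g i x j) d
    = \big[Rplus/0]_(i < n) inner (g i x) d.
  rewrite /inner; under eq_bigr do rewrite sumR_mulr.
  by rewrite exchange_big.
exact: (derivable_pt_lim_sum (F := fun i s => f i (vadd x (vscale s d))) (fun i => grad_f i x d)).
Qed.

Section Mean.
Variable n : nat.
Implicit Types a b : 'I_n -> R.

Let inv_n_ge0 : 0 <= / INR n.
Proof. by case: n => [|m]; [rewrite Rinv_0; lra | apply/Rlt_le/Rinv_0_lt_compat/lt_0_INR; lia]. Qed.

Lemma mean_le a b : (forall i, a i <= b i) -> mean a <= mean b.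
Proof. by move=> ab; apply: Rmult_le_compat_l; [exact: inv_n_ge0 | exact: ler_sumR]. Qed.

Lemma mean_ge0 a : (forall i, 0 <= a i) -> 0 <= mean a.
Proof. by move=> a_ge0; apply: Rmult_le_pos; [exact: inv_n_ge0 | apply: sumR_ge0 => i _]. Qed.

Lemma mean_gt0 a : (0 < n)%N -> (forall i, 0 < a i) -> 0 < mean a.
Proof.
move=> n_gt0 a_gt0; apply: Rmult_lt_0_compat; first exact/Rinv_0_lt_compat/lt_0_INR/ltP.
apply: Rlt_le_trans (a_gt0 (Ordinal n_gt0)) _.
by apply: sumR_term_le => j; exact/Rlt_le.
Qed.

Lemma mean_affine a b c K : mean (fun i => a i + b i + c i / 2 * K) = mean a + mean b + mean c / 2 * K.
Proof.
rewrite /mean /Rdiv; repeat rewrite ?sumR_mull ?sumR_mulr ?sumR_add.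
by apply: eq_bigr => i _; ring.
Qed.

Variable p : nat.
Implicit Types x y : svec n p.

Lemma inner_avg x w : inner (avg x) w = mean (fun i => inner (x i) w).
Proof.
rewrite /inner /avg /mean sumR_mull; under [RHS]eq_bigr do rewrite sumR_mull.
by rewrite exchange_big; apply: eq_bigr => j _; rewrite sumR_mull sumR_mulr; apply: eq_bigr => i _; ring.
Qed.

Lemma avg_sub x y : vsub (avg x) (avg y) = avg (ssub x y).
Proof.
apply: functional_extensionality => j.
by rewrite /avg /ssub /vsub -Rmult_minus_distr_l sumR_sub.
Qed.

Lemma vnorm_avg_le x : vnorm (avg x) <= mean (fun i => vnorm (x i)).
Proof.
have sq : vnorm (avg x) ^ 2 <= mean (fun i => vnorm (x i)) * vnorm (avg x).
  rewrite vnorm_sq /sqnorm inner_avg /mean Rmult_assoc sumR_mulr.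
  apply: mean_le => i; exact: cauchy_schwarz.
have := vnorm_ge0 (avg x); have := mean_ge0 (fun i => vnorm_ge0 (x i)); nra.
Qed.

End Mean.

Lemma Lmax_ge n (Ls : 'I_n -> R) i : Ls i <= Lmax Ls.
Proof.
rewrite /Lmax; elim: (index_enum _) (mem_index_enum i) => // a r IH.
rewrite in_cons big_cons => /orP [/eqP <- | /IH]; first exact: Rmax_l.
by move=> h; apply: Rle_trans h (Rmax_r _ _).
Qed.

Lemma mean_const n c : (0 < n)%N -> mean (fun _ : 'I_n => c) = c.
Proof.
move=> n_gt0; rewrite /mean sumR_const; field.
by apply/not_0_INR; move/ltP: n_gt0; lia.
Qed.

Lemma vnorm_avg_gradient_gap n p (g : 'I_n -> vec p -> vec p) (Ls : 'I_n -> R) L (X : svec n p) :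
  (0 < n)%N -> (forall i, lipschitz_grad (Ls i) (g i)) -> (forall i, 0 <= Ls i <= L) ->
  vnorm (vsub (avg (fun i => g i (avg X))) (avg (fun i => g i (X i))))
  <= L * sqrt (\big[Rplus/0]_(i < n) sqnorm (vsub (X i) (avg X))).
Proof.
move=> n_gt0 lip Ls_le; set S := sqrt _.
rewrite avg_sub; apply: Rle_trans (vnorm_avg_le _) _.
rewrite -(mean_const (L * S) n_gt0); apply: mean_le => i.
apply: Rle_trans (lip i _ _) _; rewrite vnorm_subC.
have dev_le : vnorm (vsub (X i) (avg X)) <= S.
  apply: sqrt_le_1_alt.
  exact: (sumR_term_le i (fun j => sqnorm_ge0 (vsub (X j) (avg X)))).
have := Ls_le i; have := vnorm_ge0 (vsub (X i) (avg X)); nra.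
Qed.

Section AverageObjective.
Variables (n p : nat) (f : 'I_n -> vec p -> R) (g : 'I_n -> vec p -> vec p).
Variables mu Ls : 'I_n -> R.
Hypothesis grad_f : forall i, is_gradient (f i) (g i).
Hypothesis lip_g : forall i, lipschitz_grad (Ls i) (g i).
Let F z := mean (fun i => f i z).
Let G z := avg (fun i => g i z).

Lemma avg_strongly_convex : (forall i, strongly_convex (mu i) (f i) (g i)) ->
  forall x y, F x + inner (G x) (vsub y x) + fbar_const mu / 2 * sqnorm (vsub y x) <= F y.
Proof.
move=> sc x y; rewrite inner_avg -mean_affine; apply: mean_le => i.
by have := sc i x y; rewrite vnorm_sq; lra.
Qed.

Lemma avg_smooth : (forall i, 0 <= Ls i) ->
  forall x y, F y <= F x + inner (G x) (vsub y x) + fbar_const Ls / 2 * sqnorm (vsub y x).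
Proof.
move=> Ls_ge0 x y; rewrite inner_avg -mean_affine; apply: mean_le => i.
exact: descent_lemma.
Qed.

Lemma avg_gradient_lipschitz : lipschitz_grad (fbar_const Ls) G.
Proof.
move=> x y; rewrite avg_sub; apply: Rle_trans (vnorm_avg_le _) _.
rewrite /fbar_const Rmult_assoc sumR_mulr; apply: mean_le => i; exact: lip_g.
Qed.

Lemma avg_gradient_eq0_of_min xs :
  (forall z, \big[Rplus/0]_(i < n) f i xs <= \big[Rplus/0]_(i < n) f i z) -> forall j, G xs j = 0.
Proof.
move=> xs_min j; rewrite /G /avg.
by rewrite (gradient_eq0_of_min (is_gradient_sum grad_f) xs_min); ring.
Qed.

End AverageObjective.

(** * NEAR-DGD^t *)

Section NearDGD.
Variables (n p : nat) (W : 'I_n -> 'I_n -> R) (beta : R) (t : nat).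
Variables (f : 'I_n -> vec p -> R) (g : 'I_n -> vec p -> vec p) (mu Ls : 'I_n -> R).
Variables (u : svec n p) (xstar : vec p) (gamma : R) (s0 : vec p) (alpha : R).
Hypothesis n_gt0 : (0 < n)%N.
Hypothesis W_sym : forall i j, W i j = W j i.
Hypothesis W_stoch : forall i, \big[Rplus/0]_(j < n) W i j = 1.
Hypothesis W_simple1 : forall v : 'I_n -> R,
  (forall i, \big[Rplus/0]_(l < n) (W i l * v l) = v i) -> forall i j, v i = v j.
Hypothesis beta_max : forall lam, is_eigenvalue W lam -> lam <> 1 -> Rabs lam <= beta.
Hypothesis beta01 : 0 < beta < 1.
Hypothesis grad_f : forall i, is_gradient (f i) (g i).
Hypothesis mu_gt0 : forall i, 0 < mu i.
Hypothesis Ls_gt0 : forall i, 0 < Ls i.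
Hypothesis sc_f : forall i, strongly_convex (mu i) (f i) (g i).
Hypothesis lip_g : forall i, lipschitz_grad (Ls i) (g i).
Hypothesis u_min : forall i z, f i (u i) <= f i z.
Hypothesis xstar_min : forall z,
  \big[Rplus/0]_(i < n) f i xstar <= \big[Rplus/0]_(i < n) f i z.
Hypothesis gamma_min : forall i, gamma <= mu i * Ls i / (mu i + Ls i).
Hypothesis gamma_att : exists i, gamma = mu i * Ls i / (mu i + Ls i).
Hypothesis alpha_gt0 : 0 < alpha.
Hypothesis alpha_le_invL : alpha <= / Lmax Ls.
Hypothesis alpha_le_c4 : alpha <= c4_const (fbar_const mu) (fbar_const Ls).

Let L := Lmax Ls.
Let nu := 2 * alpha * gamma.
Let y0 : svec n p := fun _ => s0.
Let D := snorm (ssub y0 u) + (nu + 4) / nu * snorm u.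
Let y k := near_y W t alpha g y0 k.
Let x k := near_x W t alpha g y0 k.

Let Ls_le i : Ls i <= L.
Proof. exact: Lmax_ge. Qed.

Let L_gt0 : 0 < L.
Proof. exact: Rlt_le_trans (Ls_gt0 (Ordinal n_gt0)) (Ls_le _). Qed.

Let alphaL : alpha * L <= 1.
Proof.
have := Rmult_le_compat_r L _ _ (Rlt_le _ _ L_gt0) alpha_le_invL.
by rewrite Rinv_l; [lra | exact: Rgt_not_eq].
Qed.

Let modulus_le i : mu i * Ls i / (mu i + Ls i) <= Ls i.
Proof.
have := mu_gt0 i; have := Ls_gt0 i => *.
apply: (Rmult_le_reg_r (mu i + Ls i)); first lra.
by rewrite /Rdiv Rmult_assoc Rinv_l; nra.
Qed.

Let nu_gt0 : 0 < nu.
Proof.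
rewrite /nu; have [i ->] := gamma_att; have := mu_gt0 i; have := Ls_gt0 i => *.
by apply: Rmult_lt_0_compat; [lra | apply: Rdiv_lt_0_compat; nra].
Qed.

Let nu_le2 : nu <= 2.
Proof.
have := gamma_min (Ordinal n_gt0); have := modulus_le (Ordinal n_gt0).
have := Ls_le (Ordinal n_gt0); have := alphaL; rewrite /nu; nra.
Qed.

Lemma snorm_local_gradient_step (X : svec n p) :
  snorm (ssub (fun i => vsub (X i) (vscale alpha (g i (X i)))) u) <= (1 - nu / 2) * snorm (ssub X u).
Proof.
apply: sqrt_le_of_le_sq.
  by apply: Rmult_le_pos; [have := nu_le2; lra | exact: snorm_ge0].
rewrite Rpow_mult_distr snorm_sq.
have h : ssqnorm (ssub (fun i => vsub (X i) (vscale alpha (g i (X i)))) u)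
       <= (1 - nu) * ssqnorm (ssub X u).
  rewrite /ssqnorm /sinner sumR_mull; apply: ler_sumR => i.
  have alphaLi : alpha * Ls i <= 1 by have := alphaL; have := Ls_le i; nra.
  apply: Rle_trans (gradient_step_to_min (X i) (grad_f i) (sc_f i) (lip_g i) (mu_gt0 i)
    (Ls_gt0 i) (u_min i) alpha_gt0 alphaLi) _.
  apply: Rmult_le_compat_r; first exact: sqnorm_ge0.
  have := gamma_min i; have := mu_gt0 i; have := Ls_gt0 i => *.
  have -> : 2 * alpha * mu i * Ls i / (mu i + Ls i) = alpha * 2 * (mu i * Ls i / (mu i + Ls i)).
    by field; lra.
  rewrite /nu; nra.
have := ssqnorm_ge0 (ssub X u); move: h; rewrite /ssqnorm /sinner; nra.
Qed.

Lemma snorm_mixZ_sub (Y : svec n p) :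
  snorm (ssub (iter t (mixZ W) Y) u) <= snorm (ssub Y u) + 2 * snorm u.
Proof.
have -> : ssub (iter t (mixZ W) Y) u
    = sadd (iter t (mixZ W) (ssub Y u)) (ssub (iter t (mixZ W) u) u).
  rewrite mixZ_iter_ssub; do 2 apply: functional_extensionality => ?.
  by rewrite /ssub /sadd /vsub /vadd; ring.
apply: Rle_trans (snorm_add _ _) _.
have := snorm_mixZ_iter n_gt0 W_sym W_stoch W_simple1 beta_max beta01 t (ssub Y u).
have := snorm_mixZ_iter n_gt0 W_sym W_stoch W_simple1 beta_max beta01 t u.
have := snorm_sub (iter t (mixZ W) u) u; lra.
Qed.

(* Mixing moves the distance to the stacked local minimizers by at most 2 ||u|| and the local
   gradient steps then contract it by 1 - nu/2, so the bound R0 + 4 ||u|| / nu is preserved. *)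
Lemma near_y_dist_bound k : snorm (ssub (y k) u) <= snorm (ssub y0 u) + 4 / nu * snorm u.
Proof.
set R0 := snorm (ssub y0 u); set U := snorm u.
have U_ge0 : 0 <= U := snorm_ge0 u; have R0_ge0 : 0 <= R0 := snorm_ge0 _.
have := nu_gt0; have := nu_le2 => *.
have fixed_point : (1 - nu / 2) * (R0 + 4 / nu * U + 2 * U) <= R0 + 4 / nu * U.
  have -> : (1 - nu / 2) * (R0 + 4 / nu * U + 2 * U) = R0 + 4 / nu * U - nu / 2 * R0 - nu * U.
    by field; lra.
  nra.
rewrite /y; elim: k => [|k IH].
  suff : 0 <= 4 / nu * U by rewrite -/R0; lra.
  by apply: Rmult_le_pos => //; apply/Rlt_le/Rdiv_lt_0_compat; lra.
set Yk := near_y W t alpha g y0 k in IH *.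
apply: Rle_trans (snorm_local_gradient_step (iter t (mixZ W) Yk)) _.
apply: Rle_trans fixed_point; apply: Rmult_le_compat_l; first lra.
by apply: Rle_trans (snorm_mixZ_sub Yk) _; rewrite -/U; lra.
Qed.

Lemma near_y_bounded k : snorm (y k) <= D.
Proof.
have -> : y k = sadd (ssub (y k) u) u.
  by do 2 apply: functional_extensionality => ?; rewrite /ssub /sadd /vsub /vadd; ring.
apply: Rle_trans (snorm_add _ _) _.
have -> : D = snorm (ssub y0 u) + 4 / nu * snorm u + snorm u.
  by rewrite /D; field; exact: Rgt_not_eq nu_gt0.
by have := near_y_dist_bound k; lra.
Qed.

Lemma near_dgd_radius_ge0 : 0 <= D.
Proof.
apply: Rplus_le_le_0_compat; first exact: snorm_ge0.
have nu_pos := nu_gt0.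
by apply: Rmult_le_pos; [apply/Rlt_le/Rdiv_lt_0_compat; lra | exact: snorm_ge0].
Qed.

Lemma consensus_error_bound k :
  sqrt (\big[Rplus/0]_(i < n) sqnorm (vsub (x k i) (avg (x k)))) <= beta ^ t * D.
Proof.
apply: sqrt_le_of_le_sq.
  by apply: Rmult_le_pos; [apply: pow_le; lra | exact: near_dgd_radius_ge0].
apply: Rle_trans (consensus_mixZ_iter n_gt0 W_sym W_stoch W_simple1 beta_max beta01 t (y k)) _.
rewrite pow_double Rpow_mult_distr -snorm_sq.
apply: Rmult_le_compat_l; first exact: pow2_ge_0.
by have := near_y_bounded k; have := snorm_ge0 (y k); nra.
Qed.

Let c2 := c2_const (fbar_const mu) (fbar_const Ls).

Lemma avg_gradient_step (X : svec n p) :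
  avg (fun i => vsub (X i) (vscale alpha (g i (X i))))
  = vsub (avg X) (vscale alpha (avg (fun i => g i (X i)))).
Proof.
apply: functional_extensionality => j; rewrite /avg /vsub /vscale.
by rewrite -sumR_sub -sumR_mull; ring.
Qed.

Lemma xbar_step delta k : 0 < delta ->
  vnorm (vsub (avg (x k.+1)) xstar) ^ 2
  <= (1 - alpha * c2 + alpha * delta - alpha ^ 2 * delta * c2) * vnorm (vsub (avg (x k)) xstar) ^ 2
     + alpha * (alpha + / delta) * D ^ 2 * L ^ 2 * beta ^ (2 * t).
Proof.
move=> delta_gt0; set X := x k; set xb := avg X.
pose G z := avg (fun i => g i z).
have mu_bar : 0 < fbar_const mu := mean_gt0 n_gt0 mu_gt0.
have L_bar : 0 < fbar_const Ls := mean_gt0 n_gt0 Ls_gt0.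
have G_xstar : G xstar = fun _ => 0.
  exact/functional_extensionality/(avg_gradient_eq0_of_min grad_f xstar_min).
set a := vsub (vsub xb (vscale alpha (G xb))) (vsub xstar (vscale alpha (G xstar))).
set b := vscale alpha (vsub (G xb) (avg (fun i => g i (X i)))).
have next_split : vsub (avg (x k.+1)) xstar = vadd a b.
  have -> : x k.+1 = iter t (mixZ W) (fun i => vsub (X i) (vscale alpha (g i (X i)))) by [].
  rewrite (avg_mixZ_iter W_sym W_stoch) avg_gradient_step.
  apply: functional_extensionality => j.
  by rewrite /a /b /xb G_xstar /vadd /vsub /vscale /=; ring.
have a_le : sqnorm a <= (1 - alpha * c2) * sqnorm (vsub xb xstar).
  have -> : 1 - alpha * c2 = 1 - 2 * alpha * fbar_const mu * fbar_const Ls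
      / (fbar_const mu + fbar_const Ls) by rewrite /c2 /c2_const; field; lra.
  apply: gradient_step_contraction => //.
  - exact: avg_strongly_convex.
  - by apply: avg_smooth => // i; exact/Rlt_le.
  - exact: avg_gradient_lipschitz.
have b_le : sqnorm b <= alpha ^ 2 * (L * (beta ^ t * D)) ^ 2.
  rewrite /b sqnorm_scale -vnorm_sq; apply: Rmult_le_compat_l; first exact: pow2_ge_0.
  apply: pow_incr; split; first exact: vnorm_ge0.
  apply: Rle_trans (vnorm_avg_gradient_gap (L := L) X n_gt0 lip_g _) _.
    by move=> i; have := Ls_gt0 i; have := Ls_le i; lra.
  by apply: Rmult_le_compat_l; [lra | exact: consensus_error_bound].
rewrite next_split !vnorm_sq.
apply: Rle_trans (sqnorm_add_young a b (Rmult_lt_0_compat _ _ alpha_gt0 delta_gt0)) _.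
have inv_gt0 : 0 < / (alpha * delta) by apply/Rinv_0_lt_compat/Rmult_lt_0_compat.
have := Rmult_le_compat_l (1 + alpha * delta) _ _ ltac:(nra) a_le.
have := Rmult_le_compat_l (1 + / (alpha * delta)) _ _ ltac:(lra) b_le.
have -> : alpha * (alpha + / delta) * D ^ 2 * L ^ 2 * beta ^ (2 * t)
    = (1 + / (alpha * delta)) * (alpha ^ 2 * (L * (beta ^ t * D)) ^ 2).
  by rewrite pow_double; field; lra.
have -> : 1 - alpha * c2 + alpha * delta - alpha ^ 2 * delta * c2
    = (1 + alpha * delta) * (1 - alpha * c2) by ring.
lra.
Qed.

End NearDGD.

Lemma c2_const_gt0 m l : 0 < m -> 0 < l -> 0 < c2_const m l.
Proof.
by move=> m_gt0 l_gt0; apply: Rdiv_lt_0_compat; [apply: Rmult_lt_0_compat; lra | lra].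
Qed.

(* With delta = c / (2 (1 - a c)) the two constants of the one-step bound become
   1 - a c / 2 and (2 - a c) / c, and the fixed point of the recursion is (K / c)^2 2 (2 - a c). *)
Lemma tuned_recursion_rate (e : nat -> R) a c K :
  0 < a -> 0 < c -> a * c < 1 -> 0 <= K -> (forall k, 0 <= e k) ->
  (forall k, e k.+1 ^ 2
     <= (1 - a * c / 2) * e k ^ 2 + a * (a + / (c / (2 * (1 - a * c)))) * K ^ 2) ->
  forall k, e k <= sqrt (1 - a * c / 2) ^ k * e 0%N + K / c * sqrt (2 * (2 - a * c)).
Proof.
move=> a_gt0 c_gt0 ac_lt1 K_ge0 e_ge0 rec k.
have ac_gt0 : 0 < a * c by apply: Rmult_lt_0_compat.
have C_def : a * (a + / (c / (2 * (1 - a * c)))) * K ^ 2 = a * (2 - a * c) / c * K ^ 2.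
  by field; lra.
rewrite C_def in rec.
have C_ge0 : 0 <= a * (2 - a * c) / c * K ^ 2.
  apply: Rmult_le_pos; last exact: pow2_ge_0.
  by apply: Rmult_le_pos; [nra | exact/Rlt_le/Rinv_0_lt_compat].
apply: Rle_trans (sqrt_recursion_bound _ C_ge0 e_ge0 rec k) _; first lra.
apply/Rplus_le_compat_l/sqrt_le_of_le_sq.
  by apply: Rmult_le_pos; [apply: Rmult_le_pos; [|exact/Rlt_le/Rinv_0_lt_compat] | exact: sqrt_pos].
rewrite Rpow_mult_distr pow2_sqrt; last lra.
by apply: Req_le; field; lra.
Qed.

Theorem theorem2
  (n p : nat) (hn : (0 < n)%N)
  (W : 'I_n -> 'I_n -> R)
  (hWsym : forall i j, W i j = W j i)
  (hWnn : forall i j, 0 <= W i j)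
  (hWdiag : forall i, 0 < W i i)
  (hWstoch : forall i, \big[Rplus/0]_(j < n) W i j = 1)
  (hW1simple : forall v : 'I_n -> R,
      (forall i, \big[Rplus/0]_(l < n) (W i l * v l) = v i) -> forall i j, v i = v j)
  (hWspec : forall lam, is_eigenvalue W lam -> lam <> 1 -> -1 < lam < 1)
  (beta : R)
  (hbeta_max : forall lam, is_eigenvalue W lam -> lam <> 1 -> Rabs lam <= beta)
  (hbeta_att : exists lam, is_eigenvalue W lam /\ lam <> 1 /\ Rabs lam = beta)
  (hbeta : 0 < beta < 1)
  (t : nat) (ht : (1 <= t)%N)
  (f : 'I_n -> vec p -> R) (g : 'I_n -> vec p -> vec p)
  (mu Ls : 'I_n -> R)
  (hgrad : forall i, is_gradient (f i) (g i))
  (hmu : forall i, 0 < mu i)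
  (hL : forall i, 0 < Ls i)
  (hsc : forall i, strongly_convex (mu i) (f i) (g i))
  (hlip : forall i, lipschitz_grad (Ls i) (g i))
  (u : svec n p) (hu : forall i z, f i (u i) <= f i z)
  (xstar : vec p)
  (hxstar : forall z, \big[Rplus/0]_(i < n) f i xstar <= \big[Rplus/0]_(i < n) f i z)
  (gamma : R)
  (hgamma_min : forall i, gamma <= mu i * Ls i / (mu i + Ls i))
  (hgamma_att : exists i, gamma = mu i * Ls i / (mu i + Ls i))
  (s0 : vec p) (alpha : R)
  (halpha : 0 < alpha)
  (halpha1 : alpha <= / Lmax Ls)
  (halpha2 : alpha <= c4_const (fbar_const mu) (fbar_const Ls)) :
  let L := Lmax Ls in
  let c2 := c2_const (fbar_const mu) (fbar_const Ls) in
  let nu := 2 * alpha * gamma in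
  let y0 : svec n p := fun _ => s0 in
  let D := snorm (ssub y0 u) + (nu + 4) / nu * snorm u in
  let xbar := fun k => avg (near_x W t alpha g y0 k) in
  let c1sq := fun delta => 1 - alpha * c2 + alpha * delta - alpha ^ 2 * delta * c2 in
  let c3sq := fun delta => alpha * (alpha + / delta) * D ^ 2 * L ^ 2 in
  (forall delta, 0 < delta -> forall k : nat,
     (vnorm (vsub (xbar (S k)) xstar)) ^ 2
       <= c1sq delta * (vnorm (vsub (xbar k) xstar)) ^ 2 + c3sq delta * beta ^ (2 * t))
  /\
  (alpha * c2 < 1 ->
     let delta := c2 / (2 * (1 - alpha * c2)) in
     let c1 := sqrt (1 - alpha * c2 / 2) in
     c1sq delta = c1 ^ 2 /\ 0 < c1 < 1 /\
     forall k : nat,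
       vnorm (vsub (xbar k) xstar)
         <= c1 ^ k * vnorm (vsub (xbar 0%nat) xstar)
            + L * D * beta ^ t / c2 * sqrt (2 * (2 - alpha * c2))).
Proof.
move=> L c2 nu y0 D xbar c1sq c3sq.
have step := xbar_step t s0 hn hWsym hWstoch hW1simple hbeta_max hbeta hgrad hmu hL hsc hlip
  hu hxstar hgamma_min hgamma_att halpha halpha1 halpha2.
split=> [delta delta_gt0 k | alpha_c2 delta c1]; first exact: step.
have c2_gt0 : 0 < c2 := c2_const_gt0 (mean_gt0 hn hmu) (mean_gt0 hn hL).
have q_gt0 : 0 < 1 - alpha * c2 / 2 by nra.
have c1_sq : c1 ^ 2 = 1 - alpha * c2 / 2 by rewrite /c1 pow2_sqrt; lra.
have c1sq_delta : c1sq delta = c1 ^ 2 by rewrite c1_sq /c1sq /delta; field; nra.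
split=> //; split; first split; first exact: sqrt_lt_R0.
  by rewrite -sqrt_1 /c1; apply: sqrt_lt_1_alt; nra.
have L_ge0 : 0 <= L := Rle_trans _ _ _ (Rlt_le _ _ (hL (Ordinal hn))) (Lmax_ge _ _).
have D_ge0 : 0 <= D := near_dgd_radius_ge0 u s0 hmu hL hgamma_att halpha.
apply: tuned_recursion_rate => //.
- by apply/Rmult_le_pos/pow_le; nra.
- by move=> k; exact: vnorm_ge0.
- move=> k; rewrite -c1_sq -c1sq_delta.
  have -> : alpha * (alpha + / delta) * (L * D * beta ^ t) ^ 2 = c3sq delta * beta ^ (2 * t).
    by rewrite /c3sq pow_double; ring.
  by apply: step; apply: Rdiv_lt_0_compat; lra.
Qed.
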